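(* Let $L$ be a multiplicative lattice and $q$ a proper element of $L$. Then $\sqrt{q}$, $Nil(L)$ and $Jac(L)$ are quasi $n$-absorbing elements of $L$ for all $n\ge2$.
   Context: A multiplicative lattice is a complete lattice $L$ with least element $0$ and compact greatest element $1$, equipped with a commutative, associative product that distributes over arbitrary joins and has $1$ as multiplicative identity. An element $a$ is compact if $a\le\bigvee_{\alpha\in I}a_\alpha$ implies $a\le\bigvee_{\alpha\in I_0}a_\alpha$ for some finite $I_0\subseteq I$; $L_*$ denotes the set of compact elements. A proper element $p$ ($p<1$) is prime if $ab\le p$ with $a,b\in L$ implies $a\le p$ or $b\le p$; a proper element $m$ is maximal if $m<x\le1$ implies $x=1$. For $a\in L$, $\sqrt{a}=\bigwedge\{p: p \text{ prime}, a\le p\}$; $Nil(L)=\sqrt{0}$; $Jac(L)=\bigwedge\{m: m \text{ maximal}\}$. A proper element $q$ is quasi $n$-absorbing if whenever $a^nb\le q$ for some $a,b\in L_*$, then $a^n\le q$ or $a^{n-1}b\le q$. *)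

From Stdlib Require Import List.

(* Join of an arbitrary set is the primitive; joins of indexed families
   a_alpha (alpha in I) are joins of their ranges. *)
Structure mlattice := MLattice {
  carrier :> Type;
  mle : carrier -> carrier -> Prop;
  mle_refl : forall x, mle x x;
  mle_trans : forall x y z, mle x y -> mle y z -> mle x z;
  mle_antisym : forall x y, mle x y -> mle y x -> x = y;
  msup : (carrier -> Prop) -> carrier;
  msup_ub : forall (S : carrier -> Prop) x, S x -> mle x (msup S);
  msup_least : forall (S : carrier -> Prop) y,
      (forall x, S x -> mle x y) -> mle (msup S) y;
  mmul : carrier -> carrier -> carrier;
  mmulC : forall x y, mmul x y = mmul y x;
  mmulA : forall x y z, mmul x (mmul y z) = mmul (mmul x y) z;
  mmul_sup : forall a (S : carrier -> Prop),
      mmul a (msup S) = msup (fun y => exists x, S x /\ y = mmul a x);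
  mmul_top : forall x, mmul (msup (fun _ => True)) x = x;
  (* the greatest element 1 is compact *)
  mtop_compact : forall (I : Type) (f : I -> carrier),
      mle (msup (fun _ => True)) (msup (fun y => exists i, f i = y)) ->
      exists l : list I,
        mle (msup (fun _ => True)) (msup (fun y => exists i, In i l /\ f i = y))
}.

Arguments mle {m}.
Arguments msup {m}.
Arguments mmul {m}.

Section Defs.
Variable L : mlattice.

Definition mzero : L := msup (fun _ => False).
Definition mtop : L := msup (fun _ => True).

Definition mjoin {I : Type} (f : I -> L) : L := msup (fun y => exists i, f i = y).
Definition minf (S : L -> Prop) : L := msup (fun y => forall x, S x -> mle y x).

Fixpoint mpow (a : L) (n : nat) : L :=
  match n with O => mtop | S k => mmul a (mpow a k) end.

Definition compact (a : L) : Prop :=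
  forall (I : Type) (f : I -> L), mle a (mjoin f) ->
  exists l : list I, mle a (msup (fun y => exists i, In i l /\ f i = y)).

Definition mlt (x y : L) : Prop := mle x y /\ x <> y.
Definition proper (p : L) : Prop := mlt p mtop.

Definition prime (p : L) : Prop :=
  proper p /\ forall a b : L, mle (mmul a b) p -> mle a p \/ mle b p.

Definition maximal (m : L) : Prop :=
  proper m /\ forall x : L, mlt m x -> mle x mtop -> x = mtop.

Definition radical (a : L) : L := minf (fun p => prime p /\ mle a p).
Definition Nil : L := radical mzero.
Definition Jac : L := minf maximal.

Definition quasi_n_absorbing (n : nat) (q : L) : Prop :=
  proper q /\
  forall a b : L, compact a -> compact b ->
    mle (mmul (mpow a n) b) q ->
    mle (mpow a n) q \/ mle (mmul (mpow a (n - 1)) b) q.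
End Defs.

Arguments mzero {L}. Arguments mtop {L}. Arguments proper {L}.
Arguments radical {L}.
Arguments quasi_n_absorbing {L}.

(** The meet of a nonempty family of primes is quasi n-absorbing for n >= 2:
    if [a^n b <= p] with [p] prime, primality splits off one factor [a], and
    either [a^(n-1) b <= p] directly or [a <= p], whence [a^(n-1) b <= a <= p].
    Each of [sqrt q], [Nil L] and [Jac L] is such a meet, and the family is
    nonempty because, by Zorn's lemma and compactness of [1], the proper
    element [q] lies below a maximal element, which is prime. *)

From Stdlib Require Import List Classical Lia.
From mathcomp Require boolp classical_sets.

Section MultiplicativeLattice.
Variable L : mlattice.

Lemma mle_top (x : L) : mle x mtop.
Proof. apply msup_ub; exact I. Qed.

Lemma le_minf (P : L -> Prop) (x : L) :
  (forall p, P p -> mle x p) -> mle x (minf L P).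
Proof. intros H. apply msup_ub. exact H. Qed.

Lemma minf_le (P : L -> Prop) (p : L) : P p -> mle (minf L P) p.
Proof. intros Hp. apply msup_least. intros x Hx. apply Hx, Hp. Qed.

Lemma mmul_monor (a x y : L) : mle x y -> mle (mmul a x) (mmul a y).
Proof.
  intros Hxy.
  assert (Ey : y = msup (fun z => z = x \/ z = y)).
  { apply mle_antisym.
    - apply msup_ub. right. reflexivity.
    - apply msup_least. intros z [-> | ->]; [exact Hxy | apply mle_refl]. }
  rewrite Ey, mmul_sup. apply msup_ub. exists x. split; [left |]; reflexivity.
Qed.

Lemma mmul_le_l (a b : L) : mle (mmul a b) a.
Proof.
  apply mle_trans with (mmul a mtop).
  - apply mmul_monor, mle_top.
  - rewrite mmulC. unfold mtop. rewrite mmul_top. apply mle_refl.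
Qed.

Lemma mmul_le_r (a b : L) : mle (mmul a b) b.
Proof. rewrite mmulC. apply mmul_le_l. Qed.

Lemma mpowS_le (a : L) (k : nat) : mle (mpow L a (S k)) a.
Proof. apply mmul_le_l. Qed.

Lemma prime_mul_mpowS (p a b : L) (k : nat) : prime L p -> 1 <= k ->
  mle (mmul (mpow L a (S k)) b) p -> mle (mmul (mpow L a k) b) p.
Proof.
  intros [_ Hp] Hk Hab. simpl mpow in Hab. rewrite <- mmulA in Hab.
  destruct (Hp _ _ Hab) as [Ha | Hb]; [| exact Hb].
  destruct k as [| k]; [lia |].
  apply mle_trans with (mpow L a (S k)); [apply mmul_le_l |].
  apply mle_trans with a; [apply mpowS_le | exact Ha].
Qed.

Lemma minf_proper (P : L -> Prop) (p : L) :
  P p -> proper p -> proper (minf L P).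
Proof.
  intros Hp [_ Hptop]. split; [apply mle_top |]. intros E. apply Hptop.
  apply mle_antisym; [apply mle_top |]. rewrite <- E. apply minf_le, Hp.
Qed.

Lemma minf_primes_quasi_n_absorbing (P : L -> Prop) (p0 : L) (n : nat) :
  (forall p, P p -> prime L p) -> P p0 -> 2 <= n ->
  quasi_n_absorbing n (minf L P).
Proof.
  intros HP Hp0 Hn. split.
  - apply minf_proper with p0; [exact Hp0 | apply (HP _ Hp0)].
  - intros a b _ _ Hab. right. apply le_minf. intros p Hp.
    replace n with (S (n - 1)) in Hab by lia.
    apply prime_mul_mpowS; [apply HP, Hp | lia |].
    apply mle_trans with (minf L P); [exact Hab | apply minf_le, Hp].
Qed.

Lemma maximal_prime (m : L) : maximal L m -> prime L m.
Proof.
  intros [Hm Hmax]. split; [exact Hm |]. intros a b Hab.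
  destruct (classic (mle a m)) as [Ha | Ha]; [left; exact Ha | right].
  set (j := msup (fun z => z = m \/ z = a)).
  assert (Hj : j = mtop).
  { apply Hmax; [| apply mle_top]. split.
    - apply msup_ub. left. reflexivity.
    - intros E. apply Ha. rewrite E. apply msup_ub. right. reflexivity. }
  assert (Hjb : mle (mmul b j) m).
  { unfold j. rewrite mmul_sup. apply msup_least.
    intros y [x [[-> | ->] ->]]; [apply mmul_le_r | rewrite mmulC; exact Hab]. }
  rewrite mmulC, Hj in Hjb. unfold mtop in Hjb. rewrite mmul_top in Hjb.
  exact Hjb.
Qed.

Lemma chain_list_ub (C : L -> Prop) (c0 : L) :
  C c0 -> classical_sets.total_on C mle ->
  forall l : list {y | C y},
  exists c, C c /\ forall i, In i l -> mle (proj1_sig i) c.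
Proof.
  intros Hc0 Htot. induction l as [| i l IH].
  - exists c0. split; [exact Hc0 | intros i []].
  - destruct IH as [c [Hc Hl]].
    destruct (Htot (proj1_sig i) c (proj2_sig i) Hc) as [Hic | Hci].
    + exists c. split; [exact Hc |]. intros j [<- | Hj]; auto.
    + exists (proj1_sig i). split; [apply (proj2_sig i) |].
      intros j [<- | Hj]; [apply mle_refl | eapply mle_trans; eauto].
Qed.

Lemma msup_chain_neq_top (C : L -> Prop) (c0 : L) :
  C c0 -> classical_sets.total_on C mle -> (forall c, C c -> c <> mtop) ->
  msup C <> mtop.
Proof.
  intros Hc0 Htot HC E.
  destruct (mtop_compact L {y | C y} (@proj1_sig _ _)) as [l Hl].
  { change (msup (fun _ => True)) with (@mtop L). rewrite <- E.
    apply msup_least. intros y Hy. apply msup_ub. exists (exist _ y Hy).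
    reflexivity. }
  destruct (chain_list_ub C c0 Hc0 Htot l) as [c [Hc Hlc]].
  apply (HC c Hc). apply mle_antisym; [apply mle_top |].
  eapply mle_trans; [exact Hl |].
  apply msup_least. intros y [i [Hi <-]]. apply Hlc, Hi.
Qed.

Lemma exists_maximal_ge (q : L) : proper q -> exists m, maximal L m /\ mle q m.
Proof.
  intros [_ Hq].
  pose (T := {x : L | mle q x /\ x <> mtop}).
  pose (R := fun s t : T => boolp.asbool (mle (proj1_sig s) (proj1_sig t))).
  assert (HR : forall s t, R s t = true <-> mle (proj1_sig s) (proj1_sig t)).
  { intros s t. split; [apply boolp.asboolW | apply boolp.asboolT]. }
  destruct (@classical_sets.ZL_preorder T (exist _ q (conj (mle_refl _ q) Hq)) R)
    as [t Ht].
  - intros s. apply HR, mle_refl.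
  - intros r s t Hrs Hst. apply HR. apply HR in Hrs, Hst. eapply mle_trans; eauto.
  - intros A Htot.
    pose (C := fun y : L => y = q \/ exists s, A s /\ proj1_sig s = y).
    assert (HCq : forall y, C y -> mle q y /\ y <> mtop).
    { intros y [-> | [s [_ <-]]].
      - split; [apply mle_refl | exact Hq].
      - apply (proj2_sig s). }
    assert (HCtot : classical_sets.total_on C mle).
    { intros y z [-> | [s [Hs <-]]] Hz; [left; apply HCq, Hz |].
      destruct Hz as [-> | [s' [Hs' <-]]]; [right; apply (proj2_sig s) |].
      destruct (Htot s s' Hs Hs') as [H | H]; apply HR in H; auto. }
    assert (Hsup : mle q (msup C) /\ msup C <> mtop).
    { split; [apply msup_ub; left; reflexivity |].
      apply msup_chain_neq_top with q; [left; reflexivity | exact HCtot |].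
      intros c Hc. apply HCq, Hc. }
    exists (exist _ (msup C) Hsup). intros s Hs. apply HR. simpl.
    apply msup_ub. right. exists s. split; [exact Hs | reflexivity].
  - exists (proj1_sig t). split; [| apply (proj2_sig t)].
    split; [split; [apply mle_top | apply (proj2_sig t)] |].
    intros x [Htx Hneq] _. apply NNPP. intros Hx.
    assert (Hqx : mle q x /\ x <> mtop).
    { split; [eapply mle_trans; [apply (proj2_sig t) | exact Htx] | exact Hx]. }
    apply Hneq, mle_antisym; [exact Htx |].
    apply (HR (exist _ x Hqx) t), Ht, HR, Htx.
Qed.

End MultiplicativeLattice.

Theorem mainTheorem6 (L : mlattice) (q : L) (hq : proper q) :
  forall n : nat, 2 <= n ->
    quasi_n_absorbing n (radical q) /\
    quasi_n_absorbing n (Nil L) /\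
    quasi_n_absorbing n (Jac L).
Proof.
  intros n Hn.
  destruct (exists_maximal_ge L q hq) as [m [Hm Hqm]].
  pose proof (maximal_prime L m Hm) as Hmp.
  assert (Hzero : mle mzero m) by (apply msup_least; intros x []).
  split; [| split].
  - apply minf_primes_quasi_n_absorbing with m; [intros p [Hp _] | split |]; auto.
  - apply minf_primes_quasi_n_absorbing with m; [intros p [Hp _] | split |]; auto.
  - apply minf_primes_quasi_n_absorbing with m; [exact (maximal_prime L) | |]; auto.
Qed.
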